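(* Let $R$ be an associative ring with identity, $M$ a left $R$-module which is projective in $\sigma[M]$, and $P\leq M$ a submodule. Then $P$ is a large prime submodule of $M$ if and only if $\eta^M_P$ is a prime preradical.
   Context: $\sigma[M]$ is the full subcategory of modules subgenerated by $M$. $\Lambda^{fi}(M)$ is the set of fully invariant submodules of $M$. For $N,L\leq M$, $N_ML=\sum\{f(N)\mid f\in\mathrm{Hom}_R(M,L)\}$. A large prime submodule of $M$ is a submodule $P\neq M$ such that for all $N,L\in\Lambda^{fi}(M)$, $N_ML\subseteq P$ implies $N\subseteq P$ or $L\subseteq P$. A preradical $r$ on $R$-Mod is a subfunctor of the identity functor; preradicals are ordered by $r\preceq s$ iff $r(X)\subseteq s(X)$ for all modules $X$; the product is $(r\cdot s)(X)=r(s(X))$; $\underline{1}$ is the identity functor. A preradical $r$ is prime if $r\neq\underline{1}$ and $s\cdot t\preceq r$ implies $s\preceq r$ or $t\preceq r$. For $P\leq M$, $\eta^M_P(L)=\bigcap\{f^{-1}(P)\mid f\in\mathrm{Hom}_R(L,M)\}$. *)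

From HB Require Import structures.
From mathcomp Require Import all_boot all_algebra.
Set Implicit Arguments. Unset Strict Implicit. Unset Printing Implicit Defensive.
Import GRing.Theory.
Local Open Scope ring_scope.

Section ModuleDefs.
Variable R : pzRingType.

Definition is_submod (M : lmodType R) (N : M -> Prop) : Prop :=
  [/\ N 0, (forall x y, N x -> N y -> N (x + y)) &
      (forall (a : R) x, N x -> N (a *: x))].

Definition subm_le (M : lmodType R) (N L : M -> Prop) : Prop :=
  forall x, N x -> L x.

Definition fully_invariant (M : lmodType R) (N : M -> Prop) : Prop :=
  is_submod N /\ forall (f : {linear M -> M}) x, N x -> N (f x).

(* N_M L = sum of f(N), f in Hom_R(M, L) (viewed as endomorphisms of M with
   image in L); the sum is the submodule generated by all these images. *)
Definition hom_prod (M : lmodType R) (N L : M -> Prop) : M -> Prop :=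
  fun x => forall S : M -> Prop, is_submod S ->
    (forall f : {linear M -> M}, (forall y, L (f y)) ->
       forall n, N n -> S (f n)) -> S x.

Definition large_prime (M : lmodType R) (P : M -> Prop) : Prop :=
  [/\ is_submod P, (exists x, ~ P x) &
      forall N L : M -> Prop, fully_invariant N -> fully_invariant L ->
        subm_le (hom_prod N L) P -> subm_le N P \/ subm_le L P].

Definition generated_by (M K : lmodType R) : Prop :=
  forall k : K, exists s : seq ({linear M -> K} * M),
    k = \sum_(p <- s) p.1 p.2.

Definition in_sigma (M N : lmodType R) : Prop :=
  exists (K : lmodType R) (i : {linear N -> K}),
    injective i /\ generated_by M K.

Definition projective_in_sigma (M : lmodType R) : Prop :=
  forall (A B : lmodType R) (g : {linear A -> B}) (f : {linear M -> B}),
    in_sigma M A -> in_sigma M B -> (forall b, exists a, g a = b) ->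
    exists h : {linear M -> A}, forall m, g (h m) = f m.

Definition preradical (r : forall X : lmodType R, X -> Prop) : Prop :=
  (forall X : lmodType R, is_submod (r X)) /\
  (forall (X Y : lmodType R) (f : {linear X -> Y}) x, r X x -> r Y (f x)).

Definition prerad_le (r s : forall X : lmodType R, X -> Prop) : Prop :=
  forall (X : lmodType R) x, r X x -> s X x.

(* (r . s)(X) = r (s X): r applied to the module s(X), presented as a module
   N together with an isomorphism i of N onto the submodule s(X) of X *)
Definition prerad_prod (r s : forall X : lmodType R, X -> Prop)
  : forall X : lmodType R, X -> Prop :=
  fun X x => exists (N : lmodType R) (i : {linear N -> X}),
    [/\ injective i, (forall y, s X y <-> exists n, i n = y) &
        exists n, r N n /\ i n = x].

Definition prime_preradical (r : forall X : lmodType R, X -> Prop) : Prop :=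
  [/\ preradical r,
      (exists (X : lmodType R) (x : X), ~ r X x) &
      forall s t, preradical s -> preradical t ->
        prerad_le (prerad_prod s t) r -> prerad_le s r \/ prerad_le t r].

Definition etaMP (M : lmodType R) (P : M -> Prop) : forall L : lmodType R, L -> Prop :=
  fun L x => forall f : {linear L -> M}, P (f x).

End ModuleDefs.

From HB Require Import structures.
From mathcomp Require Import all_boot all_algebra boolp.
Set Implicit Arguments. Unset Strict Implicit. Unset Printing Implicit Defensive.
Import GRing.Theory.
Local Open Scope ring_scope.

(** The two sides are matched by the preradicals
    [alpha^M_N(X) = sum { f(N) | f in Hom(M, X) }], the least preradical [r]
    with [N <= r(M)], and [eta^M_P], the greatest preradical [r] with
    [r(M) <= P].  For fully invariant [N] and [L], every value of
    [(alpha^M_N . alpha^M_L)(X)] is a sum of elements [g (f n)] with [n] in [N],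
    [f : M -> L] and [g : L -> X], so [N_M L <= P] gives
    [alpha^M_N . alpha^M_L <= eta^M_P]; conversely, for preradicals [s], [t]
    the elements [f(n)], [n] in [s(M)], [f : M -> t(M)], lie in [(s . t)(M)],
    so [s . t <= eta^M_P] gives [s(M)_M t(M) <= P].  Primeness then transfers
    in both directions. *)

Section Submodule.
Variables (R : pzRingType) (M : lmodType R) (S : M -> Prop).
Hypothesis S_submod : is_submod S.

(* The closure proof is a dummy argument so that [submod S_submod], and hence
   its canonical module structure, can be found from it after the section. *)
Definition submod_mem of is_submod S : pred M := fun x => `[< S x >].
Local Notation mem_S := (submod_mem S_submod).

Lemma submod_memP x : reflect (S x) (mem_S x).
Proof. exact: asboolP. Qed.

Lemma submod_mem_closed : subsemimod_closed mem_S.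
Proof.
have [S0 SD SZ] := S_submod.
split; first split.
- exact/submod_memP.
- by move=> x y /submod_memP Sx /submod_memP Sy; apply/submod_memP/SD.
- by move=> a x /submod_memP Sx; apply/submod_memP/SZ.
Qed.

HB.instance Definition _ :=
  GRing.isSubmodClosed.Build R M mem_S submod_mem_closed.

Record submod := Submod { submod_val : M; _ : mem_S submod_val }.
HB.instance Definition _ := [isSub for submod_val].
HB.instance Definition _ := [Choice of submod by <:].
HB.instance Definition _ := [SubChoice_isSubLmodule of submod by <:].

Definition submod_incl : {linear submod -> M} := \val.

Lemma submod_incl_inj : injective submod_incl.
Proof. exact: val_inj. Qed.

Lemma submod_incl_image y : S y <-> exists u, submod_incl u = y.
Proof.
split; first by move=> /submod_memP Sy; exists (Submod Sy).
by move=> [u <-]; apply/submod_memP/(valP u).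
Qed.

Section Corestriction.
Variables (N : lmodType R) (f : {linear N -> M}).
Hypothesis f_into_S : forall y, S (f y).

Definition submod_corestr (y : N) : submod :=
  Submod (introT (submod_memP _) (f_into_S y)).

Lemma submod_corestr_linear : linear submod_corestr.
Proof. by move=> a x y; apply: val_inj; rewrite /= linearP. Qed.

HB.instance Definition _ :=
  GRing.isLinear.Build R N submod _ submod_corestr submod_corestr_linear.

End Corestriction.
End Submodule.

Section Preradicals.
Variable R : pzRingType.
Implicit Types (M N X : lmodType R) (s t : forall X : lmodType R, X -> Prop).

Lemma preradical_fully_invariant s M : preradical s -> fully_invariant (s M).
Proof.
by move=> [s_submod s_natural]; split=> [|f]; [exact: s_submod | exact: s_natural].
Qed.

Lemma prerad_prod_image s t X N (f : {linear N -> X}) n :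
  preradical s -> is_submod (t X) -> (forall y, t X (f y)) -> s N n ->
  prerad_prod s t (f n).
Proof.
move=> [_ s_natural] tX_submod f_into_tX sNn.
exists (submod tX_submod), (submod_incl tX_submod); split.
- exact: submod_incl_inj.
- exact: submod_incl_image.
- by exists (submod_corestr tX_submod f_into_tX n); split; first exact: s_natural.
Qed.

Lemma hom_prod_prerad_sub s t M (P : M -> Prop) :
  preradical s -> preradical t -> is_submod P ->
  prerad_le (prerad_prod s t) (etaMP P) -> subm_le (hom_prod (s M) (t M)) P.
Proof.
move=> s_prerad [t_submod _] P_submod st_le x; apply => // f f_into_t n sMn.
exact: (st_le _ _ (prerad_prod_image s_prerad (t_submod M) f_into_t sMn) idfun).
Qed.

Section Eta.
Variables (M : lmodType R) (P : M -> Prop).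

Lemma etaMP_preradical : is_submod P -> preradical (etaMP P).
Proof.
move=> [P0 PD PZ]; split=> [X|X Y g x etax f]; last exact: (etax (f \o g)).
split=> [f|x y etax etay f|a x etax f]; first by rewrite linear0.
- by rewrite linearD; apply: PD.
- by rewrite linearZ; apply: PZ.
Qed.

Lemma etaMP_sub x : etaMP P x -> P x.
Proof. by move/(_ idfun). Qed.

Lemma prerad_le_etaMP s : preradical s -> subm_le (s M) P -> prerad_le s (etaMP P).
Proof. by move=> [_ s_natural] sM_le X x sXx f; apply/sM_le/s_natural. Qed.

Lemma etaMP_proper :
  (exists x, ~ P x) <-> exists X (x : X), ~ etaMP P x.
Proof.
split=> [[x Px]|[X [x /existsNP [f Pfx]]]]; last by exists (f x).
by exists M, x => /etaMP_sub.
Qed.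

End Eta.

Definition alphaMN M (N : M -> Prop) : forall X : lmodType R, X -> Prop :=
  fun X x => forall S : X -> Prop, is_submod S ->
    (forall (f : {linear M -> X}) n, N n -> S (f n)) -> S x.

Section Alpha.
Variables (M : lmodType R) (N : M -> Prop).

Lemma alphaMN_preradical : preradical (alphaMN N).
Proof.
split=> [X|X Y g x alx S [S0 SD SZ] gen].
  split=> [S [S0 _ _] //|x y alx aly S SS gen|a x alx S SS gen];
    have [_ SD SZ] := SS.
  - by apply: SD; [apply: alx | apply: aly].
  - by apply: SZ; apply: alx.
apply: (alx (fun z => S (g z))) => [|f n Nn]; last exact: (gen (g \o f)).
split=> [|u v Su Sv|a u Su]; first by rewrite linear0.
- by rewrite linearD; apply: SD.
- by rewrite linearZ; apply: SZ.
Qed.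

Lemma alphaMN_self n : N n -> alphaMN N n.
Proof. by move=> Nn S _ gen; exact: (gen idfun). Qed.

Lemma alphaMN_sub_fully_invariant x : fully_invariant N -> alphaMN N x -> N x.
Proof. by move=> [N_submod N_inv] alx; apply: alx => // f n; apply: N_inv. Qed.

Lemma alphaMN_le_etaMP (P : M -> Prop) :
  prerad_le (alphaMN N) (etaMP P) -> subm_le N P.
Proof.
by move=> al_le n Nn; apply: etaMP_sub; apply: al_le; exact: alphaMN_self.
Qed.

End Alpha.

Lemma prerad_prod_alphaMN_le M (N L P : M -> Prop) :
  fully_invariant L -> is_submod P -> subm_le (hom_prod N L) P ->
  prerad_le (prerad_prod (alphaMN N) (alphaMN L)) (etaMP P).
Proof.
move=> L_inv [P0 PD PZ] NL_le Z _ [Y [i [_ i_image [y [alNy <-]]]]] h.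
apply: (alNy (fun y => P (h (i y)))) => [|g n Nn].
  split=> [|u v Pu Pv|a u Pu]; first by rewrite !linear0.
  - by rewrite !linearD; apply: PD.
  - by rewrite !linearZ; apply: PZ.
have hig_into_L m : L (h (i (g m))).
  apply: (alphaMN_sub_fully_invariant L_inv).
  by apply: (alphaMN_preradical L).2; apply/i_image; exists (g m).
by apply: NL_le => S _ gen; exact: (gen (h \o i \o g) hig_into_L n Nn).
Qed.

End Preradicals.

Theorem proposition4p10 (R : pzRingType) (M : lmodType R) (P : M -> Prop) :
  projective_in_sigma M -> is_submod P ->
  (large_prime P <-> prime_preradical (etaMP P)).
Proof.
move=> _ P_submod; split.
- move=> [_ P_proper P_prime]; split; first exact: etaMP_preradical.
    exact/etaMP_proper.
  move=> s t s_prerad t_prerad st_le.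
  have [sM_le|tM_le] := P_prime _ _ (preradical_fully_invariant M s_prerad)
    (preradical_fully_invariant M t_prerad)
    (hom_prod_prerad_sub s_prerad t_prerad P_submod st_le).
  + by left; exact: prerad_le_etaMP.
  + by right; exact: prerad_le_etaMP.
- move=> [_ eta_proper eta_prime]; split => //; first exact/etaMP_proper.
  move=> N L _ L_inv NL_le.
  have [alN_le|alL_le] := eta_prime _ _ (alphaMN_preradical N)
    (alphaMN_preradical L) (prerad_prod_alphaMN_le L_inv P_submod NL_le).
  + by left; exact: alphaMN_le_etaMP.
  + by right; exact: alphaMN_le_etaMP.
Qed.
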